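(* For integers $i\ge0$, $s\ge1$ and $n>s$, let $b_{i,s}(n)$ be the coefficient of $t^i$ in the power series expansion of $\frac{f_n(t)}{f_s(t)f_{n-s}(t)}$. Then for fixed $i\ge 0$ and $s\ge 1$, the function $n\mapsto b_{i,s}(n)$ is constant for $n\ge\max(i,1)+s$.
   Context: $f_n(t):=(1-t^2)(1-t^3)\cdots(1-t^n)$ for $n\ge1$ (so $f_1=1$). *)

From mathcomp Require Import all_boot all_order all_algebra.
Set Implicit Arguments. Unset Strict Implicit. Unset Printing Implicit Defensive.
Import GRing.Theory Num.Theory.
Local Open Scope ring_scope.

Definition fpoly (n : nat) : {poly int} :=
  \prod_(2 <= k < n.+1) (1 - 'X^k).

(* Coefficients e_0, ..., e_m of the formal power series inverse 1/d, for a
   polynomial d with constant term d_0 = 1 (a unit of int[[t]]):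
   e_0 = 1, e_m = - sum_{j=1}^m d_j e_{m-j}. *)
Fixpoint ps_inv_seq (d : {poly int}) (m : nat) : seq int :=
  match m with
  | 0 => [:: 1]
  | m'.+1 =>
      let s := ps_inv_seq d m' in
      rcons s (- \sum_(1 <= j < m'.+2) d`_j * nth 0 s (m'.+1 - j))
  end.

Definition ps_inv_coef (d : {poly int}) (m : nat) : int :=
  nth 0 (ps_inv_seq d m) m.

Definition ps_div_coef (p d : {poly int}) (i : nat) : int :=
  \sum_(0 <= j < i.+1) p`_j * ps_inv_coef d (i - j).

Definition b (i s n : nat) : int :=
  ps_div_coef (fpoly n) (fpoly s * fpoly (n - s)) i.

From mathcomp Require Import all_boot all_order all_algebra.
From mathcomp Require Import zify.
Set Implicit Arguments. Unset Strict Implicit. Unset Printing Implicit Defensive.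
Import GRing.Theory Num.Theory.
Local Open Scope ring_scope.

(* Since f_n = f_(n-s) * (1 - t^(n-s+1)) ... (1 - t^n), the common factor f_(n-s)
   cancels and b_(i,s)(n) is the coefficient of t^i in
   (1 - t^(n-s+1)) ... (1 - t^n) / f_s.  When i <= n - s the numerator is 1
   modulo t^(i+1), so b_(i,s)(n) = [t^i] 1/f_s, independently of n.
   Quotient coefficients up to t^i may be computed with any inverse of the
   divisor modulo t^(i+1), since such inverses are unique. *)

Section EqModXn.
Variables (R : comNzRingType) (n : nat).

Definition eqmodXn (p q : {poly R}) := forall k, (k < n)%N -> p`_k = q`_k.

Lemma eqmodXn_sym p q : eqmodXn p q -> eqmodXn q p.
Proof. by move=> h k hk; rewrite h. Qed.

Lemma eqmodXn_trans p q r : eqmodXn p q -> eqmodXn q r -> eqmodXn p r.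
Proof. by move=> hpq hqr k hk; rewrite hpq // hqr. Qed.

Lemma eqmodXnM p p' q q' : eqmodXn p p' -> eqmodXn q q' -> eqmodXn (p * q) (p' * q').
Proof.
move=> hp hq k hk; rewrite !coefM; apply: eq_bigr => j _.
have hjk : (j <= k)%N by rewrite -ltnS.
by rewrite hp ?hq ?(leq_ltn_trans hjk) ?(leq_ltn_trans (leq_subr j k)).
Qed.

Lemma eqmodXn_inv_uniq d e e' :
  eqmodXn (d * e) 1 -> eqmodXn (d * e') 1 -> eqmodXn e e'.
Proof.
move=> he he'; apply: (@eqmodXn_trans _ (e * (d * e'))).
  by rewrite -{1}(mulr1 e); apply: eqmodXnM => //; apply: eqmodXn_sym.
by rewrite mulrA [e * d]mulrC -{2}(mul1r e'); apply: eqmodXnM.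
Qed.

Lemma prod_1_subXn_eqmodXn a c : (n <= a)%N ->
  eqmodXn (\prod_(a <= k < c) (1 - 'X^k)) 1.
Proof.
move=> hna; rewrite big_nat; apply: (big_ind (eqmodXn^~ 1)) => //.
  by move=> p q hp hq; rewrite -(mulr1 1); apply: eqmodXnM.
move=> k /andP[hak _] j hj; rewrite coefB coefXn coef1.
by rewrite (ltn_eqF (leq_trans hj (leq_trans hna hak))) subr0.
Qed.

End EqModXn.

Lemma size_ps_inv_seq (d : {poly int}) m : size (ps_inv_seq d m) = m.+1.
Proof. by elim: m => [|m IH] //=; rewrite size_rcons IH. Qed.

Lemma nth_ps_inv_seq (d : {poly int}) m k : (k <= m)%N ->
  nth 0 (ps_inv_seq d m) k = ps_inv_coef d k.
Proof.
elim: m => [|m IH]; first by rewrite leqn0 => /eqP ->.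
rewrite leq_eqVlt => /orP[/eqP -> // | hkm].
by rewrite /= nth_rcons size_ps_inv_seq hkm IH.
Qed.

Lemma ps_inv_coefS (d : {poly int}) m : ps_inv_coef d m.+1 =
  - \sum_(j < m.+1) d`_j.+1 * ps_inv_coef d (m - j).
Proof.
rewrite /ps_inv_coef /= nth_rcons size_ps_inv_seq ltnn eqxx.
rewrite big_add1 /= big_mkord; congr (- _); apply: eq_bigr => j _.
by rewrite subSS nth_ps_inv_seq // leq_subr.
Qed.

Definition ps_inv_trunc n (d : {poly int}) : {poly int} :=
  \poly_(j < n) ps_inv_coef d j.

Lemma ps_inv_truncP n (d : {poly int}) : d`_0 = 1 -> eqmodXn n (d * ps_inv_trunc n d) 1.
Proof.
move=> d0 k hk; rewrite coefM coef1.
under eq_bigr => j _ do rewrite coef_poly (leq_ltn_trans (leq_subr j k) hk).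
case: k hk => [|k] hk; first by rewrite big_ord1 d0 mul1r.
rewrite big_ord_recl d0 mul1r subn0 ps_inv_coefS addrC.
by under eq_bigr => j _ do rewrite lift0 subSS; rewrite subrr.
Qed.

Lemma ps_div_coefE (p d e : {poly int}) i : d`_0 = 1 -> eqmodXn i.+1 (d * e) 1 ->
  ps_div_coef p d i = (p * e)`_i.
Proof.
move=> d0 de1; have einv := eqmodXn_inv_uniq de1 (ps_inv_truncP d0).
rewrite /ps_div_coef coefM big_mkord; apply: eq_bigr => j _.
by rewrite einv ?coef_poly ?ltnS ?leq_subr.
Qed.

Lemma ps_div_coef_eqmodXn (p p' d : {poly int}) i : eqmodXn i.+1 p p' ->
  ps_div_coef p d i = ps_div_coef p' d i.
Proof.
by move=> hp; rewrite /ps_div_coef !big_mkord; apply: eq_bigr => j _; rewrite hp.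
Qed.

Lemma ps_div_coef_mull (c p d : {poly int}) i : c`_0 = 1 -> d`_0 = 1 ->
  ps_div_coef (c * p) (c * d) i = ps_div_coef p d i.
Proof.
move=> c0 d0; have cd0 : (c * d)`_0 = 1 by rewrite coef0M c0 d0 mulr1.
have ce1 := ps_inv_truncP (n := i.+1) c0; have de1 := ps_inv_truncP (n := i.+1) d0.
have cde1 : eqmodXn i.+1 (c * d * (ps_inv_trunc i.+1 c * ps_inv_trunc i.+1 d)) 1.
  by rewrite mulrACA -(mulr1 1); apply: eqmodXnM.
rewrite (ps_div_coefE _ cd0 cde1) (ps_div_coefE _ d0 de1) mulrACA.
rewrite -[in RHS](mul1r (p * _)).
exact: (eqmodXnM ce1 (fun _ _ => erefl) (ltnSn i)).
Qed.

Lemma ps_div_coef1 (d : {poly int}) i : ps_div_coef 1 d i = ps_inv_coef d i.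
Proof.
rewrite /ps_div_coef big_mkord big_ord_recl coef1 mul1r subn0 big1 ?addr0 //.
by move=> j _; rewrite coef1 lift0 mul0r.
Qed.

Lemma fpoly_coef0 n : (fpoly n)`_0 = 1.
Proof. by rewrite (@prod_1_subXn_eqmodXn _ 1) ?coef1. Qed.

Lemma fpoly_split m n : (0 < m <= n)%N ->
  fpoly n = fpoly m * \prod_(m.+1 <= k < n.+1) (1 - 'X^k).
Proof. by case/andP=> m_gt0 le_mn; rewrite /fpoly -big_cat_nat. Qed.

Lemma b_eq_ps_inv_coef i s n : (s < n)%N -> (i + s <= n)%N ->
  b i s n = ps_inv_coef (fpoly s) i.
Proof.
move=> lt_sn le_isn.
rewrite /b (@fpoly_split (n - s)); last by rewrite subn_gt0 lt_sn leq_subr.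
rewrite [fpoly s * _]mulrC ps_div_coef_mull ?fpoly_coef0 // -ps_div_coef1.
by apply/ps_div_coef_eqmodXn/prod_1_subXn_eqmodXn; lia.
Qed.

Theorem lemma5p1 (i s : nat) (hs : (1 <= s)%N) :
  forall n m : nat, (maxn i 1 + s <= n)%N -> (maxn i 1 + s <= m)%N ->
    b i s n = b i s m.
Proof.
by move=> n m hn hm; rewrite !b_eq_ps_inv_coef //; lia.
Qed.
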